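(* Let $\pi$ be a projective plane of order $q$ and let $n>1$ be a natural number. Then for any embedding $\phi$ of the complete bipartite graph $K_{q-n,\,n^2+n+1}$ into $\pi$, the image $\phi(W)$ of the vertex class $W$ of size $n^2+n+1$ is either the point set of a subplane of $\pi$ of order $n$, or a set of points lying on a single line.
   Context: A finite projective plane of order $q$ has $q^2+q+1$ points and lines, $q+1$ points on each line and $q+1$ lines through each point; any two distinct points lie on a unique line and any two lines meet in a unique point. An embedding of a simple graph $G=(V,E)$ into $\pi$ is an injective map $\phi$ from $V$ to the points of $\pi$ such that the induced map sending an edge $ab$ to the line through $\phi(a),\phi(b)$ is injective on $E$. A subplane of order $n$ of $\pi$ is a set of points and lines of $\pi$ which, with the inherited incidence, forms a projective plane of order $n$. *)

From mathcomp Require Import all_boot.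
Set Implicit Arguments. Unset Strict Implicit. Unset Printing Implicit Defensive.

Definition proj_plane_on (P L : finType) (I : P -> L -> bool)
    (Ps : {set P}) (Ls : {set L}) (n : nat) : Prop :=
  #|Ps| = n ^ 2 + n + 1 /\
      #|Ls| = n ^ 2 + n + 1 /\
      (forall l, l \in Ls -> #|[set p in Ps | I p l]| = n + 1) /\
      (forall p, p \in Ps -> #|[set l in Ls | I p l]| = n + 1) /\
      (forall p p', p \in Ps -> p' \in Ps -> p != p' ->
         exists! l, l \in Ls /\ I p l /\ I p' l) /\
      (forall l l', l \in Ls -> l' \in Ls -> l != l' ->
         exists! p, p \in Ps /\ I p l /\ I p l').

Definition projective_plane (P L : finType) (I : P -> L -> bool) (q : nat) :=
  proj_plane_on I [set: P] [set: L] q.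

Definition is_subplane_points (P L : finType) (I : P -> L -> bool)
    (S : {set P}) (n : nat) : Prop :=
  exists Ls : {set L}, proj_plane_on I S Ls n.

Definition collinear (P L : finType) (I : P -> L -> bool) (S : {set P}) : Prop :=
  exists l : L, forall p, p \in S -> I p l.

(* Complete bipartite graph K_{a,b}: vertices 'I_a + 'I_b, edges = pairs
   (u, w) in 'I_a * 'I_b (edge {inl u, inr w}).
   Embedding: injective on vertices, and the map edge |-> line through the
   images of its endpoints is injective.  Since two distinct points lie on a
   unique line, two edges are sent to the same line iff some line contains
   the images of all four endpoints. *)
Definition Kbip_embedding (P L : finType) (I : P -> L -> bool) (a b : nat)
    (phi : 'I_a + 'I_b -> P) : Prop :=
  injective phi /\
  forall (e e' : 'I_a * 'I_b) (l : L),
    I (phi (inl e.1)) l -> I (phi (inr e.2)) l ->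
    I (phi (inl e'.1)) l -> I (phi (inr e'.2)) l -> e = e'.

From mathcomp Require Import all_boot zify.
Set Implicit Arguments. Unset Strict Implicit. Unset Printing Implicit Defensive.

(* Let W be the image of the class of size n^2+n+1 and w in W.  Of the q+1
   lines through w, the q-n lines joining w to the other class are pairwise
   distinct and contain no second point of W, so at most n+1 lines through w
   are secants of W.  If W is not collinear, projecting a line l from a point
   of W off l shows that l carries at most n+1 points of W.  The n^2+n points
   of W other than w are then spread over at most n+1 secants through w, each
   carrying at most n of them: hence every point of W is on exactly n+1
   secants, every secant carries exactly n+1 points of W, and W together
   with its secants is a projective plane of order n. *)

Lemma card_sep_sum (T : finType) (A : {set T}) (p : pred T) :
  #|[set x in A | p x]| = \sum_(x in A) p x.
Proof.
rewrite -sum1_card [RHS]big_mkcond [LHS]big_mkcond /=; apply: eq_bigr => x _.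
by rewrite inE; case: (x \in A); case: (p x).
Qed.

Lemma sum_leq_const_eq (T : finType) (A : {set T}) (F : T -> nat) (m : nat) :
  (forall i, i \in A -> F i <= m) -> #|A| * m <= \sum_(i in A) F i ->
  forall i, i \in A -> F i = m.
Proof.
move=> le_Fm le_sum.
have split_sum : \sum_(i in A) (m - F i) + \sum_(i in A) F i = #|A| * m.
  rewrite -big_split -sum_nat_const /=.
  by apply: eq_bigr => i iA; rewrite subnK ?le_Fm.
have /eqP : \sum_(i in A) (m - F i) = 0 by lia.
rewrite sum_nat_eq0 => /forallP defect0 i iA.
have := defect0 i; rewrite iA /= subn_eq0 => le_mF.
by apply/eqP; rewrite eqn_leq le_Fm.
Qed.

Section SecantsOfPointSet.

Variables (P L : finType) (I : P -> L -> bool) (join : P -> P -> L).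
Hypothesis join_incident :
  forall p p', p != p' -> I p (join p p') && I p' (join p p').
Hypothesis line_unique : forall p p' l l',
  p != p' -> I p l -> I p' l -> I p l' -> I p' l' -> l = l'.

Definition points_on (W : {set P}) (l : L) : {set P} := [set x in W | I x l].
Definition secants (W : {set P}) : {set L} := [set l | 1 < #|points_on W l|].
Definition secants_through (W : {set P}) (w : P) : {set L} :=
  [set l in secants W | I w l].

Implicit Types (W : {set P}) (w x : P) (l : L).

Lemma join_eq p p' l : p != p' -> I p l -> I p' l -> join p p' = l.
Proof.
move=> pp' pl p'l; case/andP: (join_incident pp') => pj p'j.
exact: line_unique pp' pj p'j pl p'l.
Qed.

Lemma join_secant W w x :
  w \in W -> x \in W -> w != x -> join w x \in secants_through W w.
Proof.
move=> wW xW wx; case/andP: (join_incident wx) => wl xl.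
rewrite !inE wl andbT; apply/card_gt1P; exists w, x.
by rewrite !inE wW xW wl xl.
Qed.

Lemma neq_off_line w x l : ~~ I w l -> I x l -> w != x.
Proof. by move=> nwl xl; apply: contraNneq nwl => ->. Qed.

Lemma join_inj_on W w l : ~~ I w l -> {in points_on W l &, injective (join w)}.
Proof.
move=> nwl x y; rewrite !inE => /andP[_ xl] /andP[_ yl] jxy.
have [wx wy] := (neq_off_line nwl xl, neq_off_line nwl yl).
apply/eqP; apply: contraNT nwl => xy.
case/andP: (join_incident wx) => wjx xjx; case/andP: (join_incident wy) => _.
by rewrite -jxy => yjx; rewrite (line_unique xy xl yl xjx yjx).
Qed.

Lemma join_points_on_sub W w l : w \in W -> ~~ I w l ->
  [set join w x | x in points_on W l] \subset secants_through W w.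
Proof.
move=> wW nwl; apply/subsetP => _ /imsetP[x + ->]; rewrite inE => /andP[xW xl].
exact: join_secant (neq_off_line nwl xl).
Qed.

Lemma card_points_on_le_secants_through W w l : w \in W -> ~~ I w l ->
  #|points_on W l| <= #|secants_through W w|.
Proof.
move=> wW nwl; rewrite -(card_in_imset (join_inj_on nwl)).
exact/subset_leq_card/join_points_on_sub.
Qed.

(* Every point of W other than w lies on exactly one secant through w. *)
Lemma sum_secants_through W w : w \in W ->
  \sum_(l in secants_through W w) #|points_on W l :\ w| = #|W :\ w|.
Proof.
move=> wW; have card_on l : #|points_on W l :\ w| = \sum_(x in W :\ w) I x l.
  by rewrite -card_sep_sum; apply: eq_card => x; rewrite !inE andbA.
rewrite (eq_bigr _ (fun l _ => card_on l)) exchange_big /= -sum1_card.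
apply: eq_bigr => x; rewrite !inE => /andP[xw xW].
rewrite -card_sep_sum -(cards1 (join w x)).
have wx : w != x by rewrite eq_sym.
apply: eq_card => l; rewrite !inE.
apply/idP/eqP => [/andP[/andP[_ wl] xl] | ->]; first by rewrite (join_eq wx wl xl).
have := join_secant wW xW wx; rewrite !inE => /andP[-> ->].
by case/andP: (join_incident wx).
Qed.

Lemma sum_card_secants_through W :
  \sum_(w in W) #|secants_through W w| = \sum_(l in secants W) #|points_on W l|.
Proof.
under eq_bigr do rewrite card_sep_sum.
by rewrite exchange_big; apply: eq_bigr => l _; rewrite card_sep_sum.
Qed.

Lemma Kbip_card_secants_through a b (phi : 'I_a + 'I_b -> P) (v : 'I_b) :
  Kbip_embedding I phi ->
  a + #|secants_through [set phi (inr w) | w : 'I_b] (phi (inr v))|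
    <= #|[set l | I (phi (inr v)) l]|.
Proof.
case=> phi_inj edge_inj; set W := [set phi (inr w) | w : 'I_b].
set T := [set join (phi (inl u)) (phi (inr v)) | u : 'I_a].
have sides_neq u : phi (inl u) != phi (inr v) by apply/eqP => /phi_inj.
have card_T : #|T| = a.
  rewrite card_imset ?card_ord // => u u' eq_join.
  case/andP: (join_incident (sides_neq u)); case/andP: (join_incident (sides_neq u')).
  rewrite -eq_join => ul vl ul' vl'.
  by case: (edge_inj (u, v) (u', v) _ ul' vl' ul vl).
(* A line joining v to the other class meets W in v only, by edge injectivity. *)
have disj : [disjoint T & secants_through W (phi (inr v))].
  rewrite disjoint_subset; apply/subsetP => _ /imsetP[u _ ->].
  case/andP: (join_incident (sides_neq u)) => ul vl.
  rewrite !inE; apply/negP => /andP[/card_gt1P[x [y [xWl yWl xy]]] _].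
  move: xWl yWl xy.
  rewrite !inE => /andP[/imsetP[w _ ->] wl] /andP[/imsetP[w' _ ->] w'l].
  case: (edge_inj (u, v) (u, w) _ ul vl ul wl) => <-.
  by case: (edge_inj (u, v) (u, w') _ ul vl ul w'l) => <-; rewrite eqxx.
have := (leq_card_setU T (secants_through W (phi (inr v)))).2.
rewrite disj => /eqP; rewrite card_T => <-; apply: subset_leq_card.
rewrite subUset; apply/andP; split; apply/subsetP => l; rewrite !inE.
  by case/imsetP=> u _ ->; case/andP: (join_incident (sides_neq u)).
by case/andP.
Qed.

Variables (W : {set P}) (n : nat).
Hypothesis n_gt0 : 0 < n.
Hypothesis card_W : #|W| = n ^ 2 + n + 1.
Hypothesis secants_through_le :
  forall w, w \in W -> #|secants_through W w| <= n + 1.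
Hypothesis W_not_collinear : forall l, exists2 w, w \in W & ~~ I w l.

Lemma card_points_on_le l : #|points_on W l| <= n + 1.
Proof.
have [w wW nwl] := W_not_collinear l.
apply: leq_trans (secants_through_le wW).
exact: card_points_on_le_secants_through.
Qed.

Lemma secants_through_regular w : w \in W ->
  #|secants_through W w| = n + 1 /\
  forall l, l \in secants_through W w -> #|points_on W l| = n + 1.
Proof.
move=> wW; set S := secants_through W w.
have card_pD1 l : l \in S -> #|points_on W l| = #|points_on W l :\ w| + 1.
  by rewrite !inE => /andP[_ wl]; rewrite (cardsD1 w) !inE wW wl addnC.
have le_pD1 l : l \in S -> #|points_on W l :\ w| <= n.
  by move=> lS; have := card_points_on_le l; rewrite card_pD1 // leq_add2r.
have sum_S : \sum_(l in S) #|points_on W l :\ w| = n ^ 2 + n.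
  by rewrite sum_secants_through //; have := cardsD1 w W; rewrite wW card_W; lia.
have sum_le : \sum_(l in S) #|points_on W l :\ w| <= #|S| * n.
  by rewrite -sum_nat_const leq_sum.
have card_S : #|S| = n + 1.
  have : (n + 1) * n <= #|S| * n by apply: leq_trans sum_le; rewrite sum_S; lia.
  by rewrite leq_pmul2r // => ?; apply/eqP; rewrite eqn_leq secants_through_le.
split=> // l lS; rewrite card_pD1 // (sum_leq_const_eq le_pD1) //.
by rewrite sum_S card_S; lia.
Qed.

Lemma card_secant_points l : l \in secants W -> #|points_on W l| = n + 1.
Proof.
move=> lS; move: (lS); rewrite inE => /card_gt1P[x [_ [+ _ _]]].
rewrite inE => /andP[xW xl].
by apply: (secants_through_regular xW).2; rewrite inE lS xl.
Qed.

Lemma secant_off_point l l' : l \in secants W -> l != l' ->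
  exists2 w, w \in points_on W l & ~~ I w l'.
Proof.
rewrite inE => /card_gt1P[x [y [xWl yWl xy]]] ll'.
move: (xWl) (yWl); rewrite !inE => /andP[_ xl] /andP[_ yl].
case xl': (I x l'); last by exists x; rewrite ?xl'.
case yl': (I y l'); last by exists y; rewrite ?yl'.
by rewrite (line_unique xy xl yl xl' yl') eqxx in ll'.
Qed.

(* Projecting l' from a point w of l off l', the n+1 points of l' give all
   n+1 secants through w, so l is the join of w with a point of l'. *)
Lemma secants_meet_in_W l l' : l \in secants W -> l' \in secants W -> l != l' ->
  exists2 x, x \in W & I x l && I x l'.
Proof.
move=> lS l'S ll'; have [w] := secant_off_point lS ll'.
rewrite inE => /andP[wW wl] nwl'.
have card_img : #|[set join w x | x in points_on W l']| = #|secants_through W w|.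
  rewrite (card_in_imset (join_inj_on nwl')) card_secant_points //.
  by case: (secants_through_regular wW).
have /imsetP[x] : l \in [set join w x | x in points_on W l'].
  by rewrite (subset_cardP card_img (join_points_on_sub wW nwl')) inE lS wl.
rewrite inE => /andP[xW xl'] ->; exists x => //.
by case/andP: (join_incident (neq_off_line nwl' xl')) => _ ->.
Qed.

Lemma proj_plane_on_secants : proj_plane_on I W (secants W) n.
Proof.
have sum_eq := sum_card_secants_through W.
rewrite (eq_bigr (fun=> n + 1)) in sum_eq; last first.
  by move=> w wW; case: (secants_through_regular wW).
rewrite [RHS](eq_bigr (fun=> n + 1)) in sum_eq; last exact: card_secant_points.
rewrite !sum_nat_const card_W in sum_eq.
split=> //; split; first by nia.
split; first exact: card_secant_points.
split; first by move=> w /secants_through_regular[].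
split.
  move=> p p' pW p'W pp'; exists (join p p'); split.
    have := join_secant pW p'W pp'; rewrite inE => /andP[jS _].
    by case/andP: (join_incident pp').
  by move=> l [_ [pl p'l]]; rewrite (join_eq pp' pl p'l).
move=> l l' lS l'S ll'; have [x xW /andP[xl xl']] := secants_meet_in_W lS l'S ll'.
exists x; split=> // y [_ [yl yl']]; apply/eqP; apply: contraNT ll' => xy.
by rewrite (line_unique xy xl yl xl' yl').
Qed.

End SecantsOfPointSet.

Section ProjectivePlaneIncidence.

Variables (P L : finType) (I : P -> L -> bool) (q : nat).
Hypothesis plane : projective_plane I q.

Lemma plane_line_unique p p' l l' :
  p != p' -> I p l -> I p' l -> I p l' -> I p' l' -> l = l'.
Proof.
case: plane => _ [_ [_ [_ [join_uniq _]]]] pp' pl p'l pl' p'l'.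
have [m [_ eq_m]] := join_uniq p p' (in_setT _) (in_setT _) pp'.
by rewrite -(eq_m l) ?inE // -(eq_m l') ?inE.
Qed.

Lemma plane_join_exists :
  exists join : P -> P -> L,
    forall p p', p != p' -> I p (join p p') && I p' (join p p').
Proof.
case: plane => _ [card_L [_ [_ [join_uniq _]]]].
have [l0 _] : exists l0 : L, l0 \in [set: L] by apply/card_gt0P; rewrite card_L addn1.
exists (fun p p' => odflt l0 [pick l | I p l && I p' l]) => p p' pp' /=.
case: pickP => [l -> // | no_line].
have [l [[_ [pl p'l]] _]] := join_uniq p p' (in_setT _) (in_setT _) pp'.
by have := no_line l; rewrite pl p'l.
Qed.

End ProjectivePlaneIncidence.

Theorem theorem4p4 (P L : finType) (I : P -> L -> bool) (q n : nat)
    (hpi : projective_plane I q) (hn : 1 < n)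
    (phi : 'I_(q - n) + 'I_(n ^ 2 + n + 1) -> P)
    (hphi : Kbip_embedding I phi) :
  let W := [set phi (inr w) | w : 'I_(n ^ 2 + n + 1)] in
  is_subplane_points I W n \/ collinear I W.
Proof.
move=> W; have [join join_incident] := plane_join_exists hpi.
have line_unique := plane_line_unique hpi.
have [W_on_line | W_not_collinear] := boolP [exists l, [forall x in W, I x l]].
  by right; case/existsP: W_on_line => l /forall_inP; exists l.
left; exists (secants I W).
have card_W : #|W| = n ^ 2 + n + 1.
  by rewrite card_imset ?card_ord // => w w' /hphi.1 [].
apply: (proj_plane_on_secants join_incident line_unique (ltnW hn) card_W).
- move=> _ /imsetP[v _ ->].
  have := Kbip_card_secants_through join_incident v hphi.
  case: hpi => _ [_ [_ [card_pencil _]]].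
  have -> : #|[set l | I (phi (inr v)) l]| = q + 1.
    rewrite -(card_pencil (phi (inr v))) ?inE //.
    by apply: eq_card => l; rewrite !inE.
  rewrite -/W; lia.
- move=> l; move/existsPn/(_ l)/forall_inPn: W_not_collinear => -[w wW nwl].
  by exists w.
Qed.
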